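(* Let $\Sigma$ be a finite set of embedded dependencies over a signature $\tau$. (a) $\Sigma$ is equivalent to a finite set of tuple-generating dependencies iff $\Sigma$ is preserved under both strictly-homomorphic images and strictly-homomorphic preimages. (b) $\Sigma$ is equivalent over finite structures to a finite set of tuple-generating dependencies iff $\Sigma$ is preserved under both strictly-homomorphic images and strictly-homomorphic preimages in the finite.
   Context: Signatures are relational (constant and relation symbols). An embedded dependency (ED) is a sentence $\forall\vec{x}(\phi(\vec{x})\rightarrow\exists\vec{y}\,\psi(\vec x,\vec y))$ with $\phi,\psi$ conjunctions of atomic formulas (equalities allowed) such that every universal variable occurring in the head occurs in some relational atom of the body. A tuple-generating dependency (TGD) is an equality-free ED. A strict homomorphism from $\mathcal{A}$ onto $\mathcal{B}$ is a surjective map $h:A\to B$ with $h(c^{\mathcal A})=c^{\mathcal B}$ for every constant symbol $c$ and, for every relation symbol $R$ and every tuple $\vec a$ over $A$ of its arity, $\vec a\in R^{\mathcal A}$ iff $h(\vec a)\in R^{\mathcal B}$; then $\mathcal{B}$ is a strictly-homomorphic image of $\mathcal{A}$ and $\mathcal{A}$ a strictly-homomorphic preimage of $\mathcal{B}$. A sentence is preserved under strictly-homomorphic images (resp. preimages) if for every model $\mathcal{A}$ and every strictly-homomorphic image (resp. preimage) $\mathcal{B}$ of $\mathcal{A}$, $\mathcal{B}$ is a model; ''in the finite'' means $\mathcal{A},\mathcal{B}$ range over finite structures. *)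

From Stdlib Require Import List.
From mathcomp Require Import all_boot.


Unset Strict Implicit.
Unset Printing Implicit Defensive.

Section EDs.

Variables (C Rs : Type) (ar : Rs -> nat).

Inductive term := TVar of nat | TConst of C.

Inductive atom :=
| ARel (r : Rs) (args : (ar r).-tuple term)
| AEq (t1 t2 : term).

Definition term_vars (t : term) : seq nat :=
  match t with TVar x => [:: x] | TConst _ => [::] end.

Definition atom_vars (a : atom) : seq nat :=
  match a with
  | ARel _ args => flatten (map term_vars args)
  | AEq t1 t2 => term_vars t1 ++ term_vars t2
  end.

Definition is_rel_atom (a : atom) : bool :=
  if a is ARel _ _ then true else false.

(* forall uvars, (/\ body -> exists evars, /\ head) *)
Record ED := MkED {
  ed_uvars : seq nat;
  ed_evars : seq nat;
  ed_body : list atom;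
  ed_head : list atom }.

Definition wf_ED (e : ED) : Prop :=
  [/\ (forall a x, In a (ed_body e) -> x \in atom_vars a -> x \in ed_uvars e),
      (forall a x, In a (ed_head e) -> x \in atom_vars a ->
                   (x \in ed_uvars e) || (x \in ed_evars e)),
      (forall x, x \in ed_uvars e -> x \notin ed_evars e) &
      (forall a x, In a (ed_head e) -> x \in atom_vars a -> x \in ed_uvars e ->
         exists b, [/\ In b (ed_body e), is_rel_atom b & x \in atom_vars b])].

Definition is_TGD (e : ED) : Prop :=
  forall a, In a (ed_body e) \/ In a (ed_head e) -> is_rel_atom a.

Record structure := MkStructure {
  dom : Type;
  dom_inh : dom;
  cst : C -> dom;
  rel : forall r : Rs, (ar r).-tuple dom -> Prop }.

Definition eval_term (A : structure) (v : nat -> dom A) (t : term) : dom A :=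
  match t with TVar x => v x | TConst c => cst A c end.

Definition sat_atom (A : structure) (v : nat -> dom A) (a : atom) : Prop :=
  match a with
  | ARel r args => rel A r (map_tuple (eval_term A v) args)
  | AEq t1 t2 => eval_term A v t1 = eval_term A v t2
  end.

Definition sat_conj (A : structure) (v : nat -> dom A) (l : list atom) : Prop :=
  forall a, In a l -> sat_atom A v a.

Definition sat_ED (A : structure) (e : ED) : Prop :=
  forall v : nat -> dom A, sat_conj A v (ed_body e) ->
    exists w : nat -> dom A,
      (forall x, x \notin ed_evars e -> w x = v x) /\ sat_conj A w (ed_head e).

Definition models (A : structure) (S : list ED) : Prop :=
  forall e, In e S -> sat_ED A e.

Definition finite_structure (A : structure) : Prop :=
  exists l : list (dom A), forall x, In x l.

Definition strict_hom (A B : structure) (h : dom A -> dom B) : Prop :=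
  [/\ (forall y : dom B, exists x : dom A, h x = y),
      (forall c, h (cst A c) = cst B c) &
      (forall r (t : (ar r).-tuple (dom A)), rel A r t <-> rel B r (map_tuple h t))].

Definition preserved_images (S : list ED) : Prop :=
  forall (A B : structure) (h : dom A -> dom B),
    strict_hom A B h -> models A S -> models B S.

Definition preserved_preimages (S : list ED) : Prop :=
  forall (A B : structure) (h : dom A -> dom B),
    strict_hom A B h -> models B S -> models A S.

Definition fin_preserved_images (S : list ED) : Prop :=
  forall (A B : structure) (h : dom A -> dom B),
    finite_structure A -> finite_structure B ->
    strict_hom A B h -> models A S -> models B S.

Definition fin_preserved_preimages (S : list ED) : Prop :=
  forall (A B : structure) (h : dom A -> dom B),
    finite_structure A -> finite_structure B ->
    strict_hom A B h -> models B S -> models A S.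

Definition equiv_to_TGDs (S : list ED) : Prop :=
  exists S' : list ED,
    [/\ (forall e, In e S' -> wf_ED e), (forall e, In e S' -> is_TGD e) &
        (forall A : structure, models A S <-> models A S')].

Definition fin_equiv_to_TGDs (S : list ED) : Prop :=
  exists S' : list ED,
    [/\ (forall e, In e S' -> wf_ED e), (forall e, In e S' -> is_TGD e) &
        (forall A : structure, finite_structure A -> (models A S <-> models A S'))].

End EDs.

Arguments wf_ED {C Rs ar} e.
Arguments is_TGD {C Rs ar} e.
Arguments models {C Rs ar} A S.
Arguments sat_ED {C Rs ar} A e.
Arguments strict_hom {C Rs ar} A B h.
Arguments finite_structure {C Rs ar} A.
Arguments preserved_images {C Rs ar} S.
Arguments preserved_preimages {C Rs ar} S.
Arguments fin_preserved_images {C Rs ar} S.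
Arguments fin_preserved_preimages {C Rs ar} S.
Arguments equiv_to_TGDs {C Rs ar} S.
Arguments fin_equiv_to_TGDs {C Rs ar} S.

(* TGDs are preserved under strictly-homomorphic images and preimages: a strict
   homomorphism onto B transports relational atoms in both directions and has a
   right inverse.

   Conversely, let L list the constants occurring in Sigma and blow a structure A up
   to A x {0, ..., |L| + 1}, where relations only look at the first coordinate and
   the constant c gets as second coordinate its position in L.  The projection onto
   A is a strict homomorphism, the blow-up is finite when A is, and it interprets
   the constants of L injectively.  On structures with this separation property
   every ED of Sigma is equivalent to a TGD: an equality in the body is removed by
   substituting one side for the other (or makes the ED vacuous, if it equates two
   distinct constants), and so is an equality in the head having an existential
   variable on one side.  A head equality between two distinct terms without
   existential variables cannot occur: it fails in the blow-up of the one-point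
   structure with full relations, which satisfies Sigma by preservation under
   preimages.  For the resulting TGDs Sigma' and any A, with A+ its blow-up,
   A |= Sigma iff A+ |= Sigma iff A+ |= Sigma' iff A |= Sigma'.  The argument uses
   only blow-ups and the one-point structure, so it also works inside the class of
   finite structures. *)

From Pilot Require Import Defs.
From Stdlib Require Import List ClassicalEpsilon FunctionalExtensionality.
From mathcomp Require Import all_boot.

Set Implicit Arguments.
Unset Strict Implicit.
Unset Printing Implicit Defensive.

Arguments TVar {C}. Arguments TConst {C}.
Arguments ARel {C Rs ar}. Arguments AEq {C Rs ar}.
Arguments MkED {C Rs ar}.
Arguments ed_uvars {C Rs ar}. Arguments ed_evars {C Rs ar}.
Arguments ed_body {C Rs ar}. Arguments ed_head {C Rs ar}.
Arguments MkStructure {C Rs ar}.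
Arguments dom {C Rs ar}. Arguments dom_inh {C Rs ar}. Arguments cst {C Rs ar}.
Arguments Defs.rel {C Rs ar}.
Arguments eval_term {C Rs ar}. Arguments sat_atom {C Rs ar}.
Arguments sat_conj {C Rs ar}. Arguments atom_vars {C Rs ar}.
Arguments is_rel_atom {C Rs ar}. Arguments term_vars {C}.

Section EmbeddedDependencies.
Variables (C Rs : Type) (ar : Rs -> nat).
Local Notation term := (term C).
Local Notation atom := (atom C Rs ar).
Local Notation ED := (ED C Rs ar).
Local Notation structure := (structure C Rs ar).
Implicit Types (x y z : nat) (s t : term) (a b h : atom) (B H l : list atom)
  (U E : seq nat) (e : ED) (S : list ED) (A D : structure).

(** * Terms, variables and substitution *)

Definition atom_terms a : seq term :=
  match a with ARel _ args => args | AEq t1 t2 => [:: t1; t2] end.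

Lemma mem_term_vars x s : x \in term_vars s <-> s = TVar x.
Proof. by case: s => [y|c] //=; rewrite inE; split=> [/eqP->|[->]]. Qed.

Lemma mem_atom_vars x a : x \in atom_vars a <-> In (TVar x) (atom_terms a).
Proof.
have mem_flatten (ts : seq term) : x \in flatten (map term_vars ts) <-> In (TVar x) ts.
  elim: ts => [|s ts IH] //=; rewrite mem_cat; split.
  - by case/orP=> [/mem_term_vars ->|/IH]; [left | right].
  - by case=> [->|/IH ->]; [rewrite /= inE eqxx | rewrite orbT].
by case: a => [r args|t1 t2]; rewrite -mem_flatten //= cats0.
Qed.

Definition subst_term x t s : term :=
  if s is TVar y then (if y == x then t else s) else s.

Definition subst_atom x t a : atom :=
  match a with
  | ARel r args => ARel r (map_tuple (subst_term x t) args)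
  | AEq t1 t2 => AEq (subst_term x t t1) (subst_term x t t2)
  end.

Lemma atom_terms_subst x t a :
  atom_terms (subst_atom x t a) = map (subst_term x t) (atom_terms a).
Proof. by case: a. Qed.

Lemma is_rel_subst_atom x t a : is_rel_atom (subst_atom x t a) = is_rel_atom a.
Proof. by case: a. Qed.

Lemma in_terms_subst s x t a : In s (atom_terms (subst_atom x t a)) ->
  (In s (atom_terms a) /\ s <> TVar x) \/ (s = t /\ In (TVar x) (atom_terms a)).
Proof.
rewrite atom_terms_subst => /in_map_iff [[y|c] [<- Hs]] /=; last by left.
by case: eqP Hs => [->|/eqP nyx] Hs; [right | left; split=> // -[/eqP]; rewrite (negbTE nyx)].
Qed.

Lemma in_terms_subst_other s x t a : In s (atom_terms a) -> s <> TVar x ->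
  In s (atom_terms (subst_atom x t a)).
Proof.
move=> Hs sx; rewrite atom_terms_subst; apply/in_map_iff; exists s; split=> //.
by case: s sx {Hs} => [y|c] //= yx; case: eqP => // eyx; case: yx; rewrite eyx.
Qed.

Lemma in_terms_subst_var x t a : In (TVar x) (atom_terms a) ->
  In t (atom_terms (subst_atom x t a)).
Proof.
by move=> Hx; rewrite atom_terms_subst; apply/in_map_iff; exists (TVar x); rewrite /= eqxx.
Qed.

Definition equates a x t := a = AEq (TVar x) t \/ a = AEq t (TVar x).

Lemma equates_terms a x t : equates a x t ->
  forall s, In s (atom_terms a) <-> s = TVar x \/ s = t.
Proof. by case=> -> s; split=> /= [[<-|[<-|]]|[->|->]]; auto. Qed.

Lemma equates_not_rel a x t : equates a x t -> ~~ is_rel_atom a.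
Proof. by case=> ->. Qed.

Lemma equation_cases (p : pred nat) t1 t2 : t1 <> t2 ->
  (exists x t, [/\ equates (AEq t1 t2) x t, t <> TVar x & p x]) \/
  (forall x, In (TVar x) [:: t1; t2] -> ~~ p x).
Proof.
case: t1 t2 => [x|c] [y|d] ne.
- case px: (p x); [left; exists x, (TVar y) | case py: (p y); [left; exists y, (TVar x) | right]].
  + by split; [left | move=> [yx]; case: ne; rewrite yx |].
  + by split; [right | move=> [xy]; case: ne; rewrite xy |].
  + by move=> z /= [[<-]|[[<-]|[]]]; apply/negbT.
- case px: (p x); [left; exists x, (TConst d) | right].
  + by split; [left | |].
  + by move=> z /= [[<-]|[|[]]]; [apply/negbT|].
- case py: (p y); [left; exists y, (TConst c) | right].
  + by split; [right | |].
  + by move=> z /= [|[[<-]|[]]]; [|apply/negbT].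
- by right=> z /= [|[|[]]].
Qed.

Lemma split_equation l : (forall a, In a l -> is_rel_atom a) \/
  exists t1 t2 l', (forall b, In b l <-> In b (AEq t1 t2 :: l')) /\ size l' < size l.
Proof.
elim: l => [|a l [lrel|[t1 [t2 [l' [ll' ltl]]]]]]; first by left.
- case: a => [r args|t1 t2]; last by right; exists t1, t2, l.
  by left=> b [<-|/lrel].
- right; exists t1, t2, (a :: l'); split=> // b /=; rewrite ll' /=; tauto.
Qed.

(** * Semantics of substitution and of equations *)

Section Semantics.
Variable D : structure.
Implicit Types (v w : nat -> dom D).

Lemma eval_term_agree v w s : (forall y, s = TVar y -> w y = v y) ->
  eval_term D w s = eval_term D v s.
Proof. by case: s => [y|c] //= ->. Qed.

Lemma eval_term_upd_other v x d s : s <> TVar x ->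
  eval_term D [eta v with x |-> d] s = eval_term D v s.
Proof.
move=> sx; apply: eval_term_agree => y sy /=.
by case: eqP => // yx; case: sx; rewrite sy yx.
Qed.

Lemma upd_id v x : [eta v with x |-> v x] = v :> (nat -> dom D).
Proof. by apply: functional_extensionality => z /=; case: eqP => [->|]. Qed.

Lemma upd_upd v x d d' :
  [eta [eta v with x |-> d] with x |-> d'] = [eta v with x |-> d'] :> (nat -> dom D).
Proof. by apply: functional_extensionality => z /=; case: eqP. Qed.

Lemma eval_subst_term v x t s :
  eval_term D v (subst_term x t s) = eval_term D [eta v with x |-> eval_term D v t] s.
Proof. by case: s => [y|c] //=; case: eqP. Qed.

Lemma sat_subst_atom v x t a :
  sat_atom D v (subst_atom x t a) <-> sat_atom D [eta v with x |-> eval_term D v t] a.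
Proof.
case: a => [r args|t1 t2] /=; last by rewrite !eval_subst_term.
suff -> : map_tuple (eval_term D v) (map_tuple (subst_term x t) args) =
          map_tuple (eval_term D [eta v with x |-> eval_term D v t]) args by [].
by apply: val_inj; rewrite /= -map_comp; apply: eq_map => s; apply: eval_subst_term.
Qed.

Lemma sat_conj_subst v x t l :
  sat_conj D v (map (subst_atom x t) l) <-> sat_conj D [eta v with x |-> eval_term D v t] l.
Proof.
split=> Hl a Ha; last by move: Ha => /in_map_iff [b [<- Hb]]; apply/sat_subst_atom; apply: Hl.
by apply/sat_subst_atom; apply: Hl; apply: in_map.
Qed.

Lemma sat_conj_cons v a l : sat_conj D v (a :: l) <-> sat_atom D v a /\ sat_conj D v l.
Proof. by split=> [H|[Ha Hl] b [<-|/Hl]] //; split=> [|b Hb]; apply: H; [left | right]. Qed.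

Lemma sat_conj_incl v l l' : incl l l' -> sat_conj D v l' -> sat_conj D v l.
Proof. by move=> ll' Hl' a /ll'/Hl'. Qed.

Lemma sat_equates a x t : equates a x t ->
  forall v, sat_atom D v a <-> v x = eval_term D v t.
Proof. by case=> -> v /=; split=> ->. Qed.

Lemma models_cons e S : models D (e :: S) <-> sat_ED D e /\ models D S.
Proof. by split=> [HS|[He HS] f [<-|/HS]] //; split=> [|f fS]; apply: HS; [left | right]. Qed.

Lemma eq_sat_ED U E B B' H H' :
  (forall v, sat_conj D v B <-> sat_conj D v B') ->
  (forall v, sat_conj D v H <-> sat_conj D v H') ->
  sat_ED D (MkED U E B H) <-> sat_ED D (MkED U E B' H').
Proof. by move=> BB HH; split=> Hs v /BB /Hs [w [wv /HH Hw]]; exists w. Qed.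

Lemma sat_ED_body_subst U E a l H x t :
  equates a x t -> t <> TVar x -> x \notin E -> (forall y, t = TVar y -> y \notin E) ->
  sat_ED D (MkED U E (a :: l) H) <->
  sat_ED D (MkED U E (map (subst_atom x t) l) (map (subst_atom x t) H)).
Proof.
move=> ax tx xE tE; rewrite /sat_ED /=; split=> Hs v.
- move/sat_conj_subst=> Hl; set v' := [eta v with x |-> _] in Hl.
  have tv' : eval_term D v' t = eval_term D v t by apply: eval_term_upd_other.
  have [|w [wv Hw]] := Hs v'.
    by apply/sat_conj_cons; split=> //; apply/(sat_equates ax); rewrite tv' /= eqxx.
  have wt : eval_term D w t = w x.
    rewrite wv // /= eqxx -tv'; apply: eval_term_agree => y /tE; exact: wv.
  exists [eta w with x |-> v x]; split.
  + by move=> z zE /=; case: eqP => [->|/eqP zx] //; rewrite wv //= (negbTE zx).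
  + by apply/sat_conj_subst; rewrite eval_term_upd_other // upd_upd wt upd_id.
- case/sat_conj_cons=> /(sat_equates ax) vx Hl.
  have [|w [wv /sat_conj_subst Hw]] := Hs v; first by apply/sat_conj_subst; rewrite -vx upd_id.
  exists [eta w with x |-> eval_term D w t]; split=> // z zE /=.
  case: eqP => [->|_]; last exact: wv.
  by rewrite vx; apply: eval_term_agree => y /tE; apply: wv.
Qed.

Lemma sat_ED_head_subst U E B a l y t : equates a y t -> t <> TVar y -> y \in E ->
  sat_ED D (MkED U E B (a :: l)) <-> sat_ED D (MkED U E B (map (subst_atom y t) l)).
Proof.
move=> ay ty yE; rewrite /sat_ED /=; split=> Hs v /Hs [w [wv Hw]].
- case/sat_conj_cons: Hw => /(sat_equates ay) wy Hl.
  by exists w; split=> //; apply/sat_conj_subst; rewrite -wy upd_id.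
- move/sat_conj_subst: Hw => Hw; exists [eta w with y |-> eval_term D w t]; split.
  + by move=> z zE /=; case: eqP => [zy|_]; [rewrite zy yE in zE | apply: wv].
  + apply/sat_conj_cons; split=> //; apply/(sat_equates ay).
    by rewrite /= eqxx eval_term_upd_other.
Qed.

End Semantics.

Definition true_ED : ED := MkED [::] [::] [::] [::].

Lemma wf_true_ED : wf_ED true_ED.
Proof. by split. Qed.

Lemma sat_true_ED D : sat_ED D true_ED.
Proof. by move=> v _; exists v; split=> // ? []. Qed.

Definition full_singleton : structure :=
  MkStructure unit tt (fun _ => tt) (fun _ _ => True).

Lemma sat_ED_full_singleton e : sat_ED full_singleton e.
Proof.
move=> v _; exists v; split=> // -[r args|t1 t2] _ //=.
by case: (eval_term _ v t1); case: (eval_term _ v t2).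
Qed.

Lemma full_singleton_finite : finite_structure full_singleton.
Proof. by exists [:: tt] => -[]; left. Qed.

Lemma wf_ED_incl U E B B' H H' :
  incl B' B -> (forall b, In b B -> is_rel_atom b -> In b B') -> incl H' H ->
  wf_ED (MkED U E B H) -> wf_ED (MkED U E B' H').
Proof.
move=> B'B BB' H'H [/= W1 W2 W3 W4]; split=> //= [a x /B'B|a x /H'H|a x /H'H ah xa xU].
- exact: W1.
- exact: W2.
- by have [b [bB rb xb]] := W4 a x ah xa xU; exists b; split=> //; apply: BB'.
Qed.

Lemma wf_body_subst U E a l H x t : equates a x t ->
  wf_ED (MkED U E (a :: l) H) ->
  wf_ED (MkED U E (map (subst_atom x t) l) (map (subst_atom x t) H)).
Proof.
move=> ax [/= W1 W2 W3 W4].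
have aU z : In (TVar z) (atom_terms a) -> z \in U by move/mem_atom_vars; apply: W1; left.
have xU : x \in U by apply: aU; apply/(equates_terms ax); left.
have tU z : t = TVar z -> z \in U by move=> tz; apply: aU; apply/(equates_terms ax); right.
have lift z b : In b (a :: l) -> is_rel_atom b -> In (TVar z) (atom_terms (subst_atom x t b)) ->
    exists b', [/\ In b' (map (subst_atom x t) l), is_rel_atom b' & z \in atom_vars b'].
  case=> [<-|bl]; first by rewrite (negbTE (equates_not_rel ax)).
  move=> rb zb; exists (subst_atom x t b).
  by split; [apply: in_map | rewrite is_rel_subst_atom | apply/mem_atom_vars].
split=> //= [b z|h z|h z] /in_map_iff [b0 [<- b0in]] /mem_atom_vars /in_terms_subst.
- by case=> [[zb0 _]|[tz _]]; [apply: (W1 b0); [right | apply/mem_atom_vars] | apply: tU].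
- by case=> [[zb0 _]|[tz _]]; [apply: (W2 b0) => //; apply/mem_atom_vars | rewrite tU].
- case=> [[zb0 zx]|[tz xb0]] zU.
  + have [b [bB rb /mem_atom_vars zb]] := W4 b0 z b0in (iffRL (mem_atom_vars _ _) zb0) zU.
    by apply: (lift z b) => //; apply: in_terms_subst_other.
  + have [b [bB rb /mem_atom_vars xb]] := W4 b0 x b0in (iffRL (mem_atom_vars _ _) xb0) xU.
    by apply: (lift z b) => //; rewrite -tz; apply: in_terms_subst_var.
Qed.

Lemma wf_head_subst U E B a l y t : equates a y t ->
  wf_ED (MkED U E B (a :: l)) -> wf_ED (MkED U E B (map (subst_atom y t) l)).
Proof.
move=> ay [/= W1 W2 W3 W4].
have origin h z : In h (map (subst_atom y t) l) -> z \in atom_vars h ->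
    exists2 h0, In h0 (a :: l) & z \in atom_vars h0.
  move=> /in_map_iff [h0 [<- h0l]] /mem_atom_vars /in_terms_subst [[zh0 _]|[zt _]].
    by exists h0; [right | apply/mem_atom_vars].
  by exists a; [left | apply/mem_atom_vars/(equates_terms ay); right].
split=> //= [h z hin /(origin h z hin) [h0 h0in]|h z hin /(origin h z hin) [h0 h0in]].
- exact: W2.
- exact: W4.
Qed.

(** * Blow-ups and the elimination of equalities *)

Section Constants.
Variable L : list C.

Definition atom_consts_in a := forall c, In (TConst c) (atom_terms a) -> In c L.

Definition consts_in e := forall a, In a (ed_body e) \/ In a (ed_head e) -> atom_consts_in a.

Lemma consts_in_incl U E B B' H H' : incl B' B -> incl H' H ->
  consts_in (MkED U E B H) -> consts_in (MkED U E B' H').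
Proof. by move=> B'B H'H Hc a [/B'B|/H'H] ain; apply: Hc; [left | right]. Qed.

Lemma atom_consts_in_subst a x t : equates a x t -> atom_consts_in a ->
  forall b, atom_consts_in b -> atom_consts_in (subst_atom x t b).
Proof.
move=> ax Ha b Hb c /in_terms_subst [[cb _]|[tc _]]; first exact: Hb.
by apply: Ha; apply/(equates_terms ax); right.
Qed.

Lemma consts_in_body_subst U E a l H x t : equates a x t ->
  consts_in (MkED U E (a :: l) H) ->
  consts_in (MkED U E (map (subst_atom x t) l) (map (subst_atom x t) H)).
Proof.
move=> ax Hc; have Ha : atom_consts_in a by apply: Hc; left; left.
by move=> b [] /in_map_iff [b0 [<- b0in]]; apply: (atom_consts_in_subst ax Ha); apply: Hc;
  [left; right | right].
Qed.

Lemma consts_in_head_subst U E B a l y t : equates a y t ->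
  consts_in (MkED U E B (a :: l)) -> consts_in (MkED U E B (map (subst_atom y t) l)).
Proof.
move=> ay Hc b [bB|/in_map_iff [b0 [<- b0in]]]; first by apply: Hc; left.
by apply: (atom_consts_in_subst ay); apply: Hc; right; [left | right].
Qed.

Definition const_eqb (c d : C) : bool :=
  if excluded_middle_informative (c = d) then true else false.

Lemma const_eqbP c d : reflect (c = d) (const_eqb c d).
Proof. by rewrite /const_eqb; case: excluded_middle_informative => cd; constructor. Qed.

Lemma has_const_eqb c (cl : list C) : In c cl -> has (const_eqb c) cl.
Proof. by elim: cl => //= d cl IH [->|/IH ->]; rewrite ?orbT //; case: const_eqbP. Qed.

(* The constants of L get the tags below size L; the tags size L and size L + 1 are
   left for variables, see blowup_distinguishes. *)
Definition const_tag (c : C) : 'I_(size L).+2 := inord (find (const_eqb c) L).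

Lemma const_tagE c : const_tag c = find (const_eqb c) L :> nat.
Proof. by rewrite inordK // ltnS leqW // find_size. Qed.

Lemma const_tag_lt c : In c L -> const_tag c < size L.
Proof. by move/has_const_eqb; rewrite has_find const_tagE. Qed.

Lemma const_tag_inj c d : In c L -> In d L -> const_tag c = const_tag d -> c = d.
Proof.
move=> /has_const_eqb/(nth_find c)/const_eqbP cL /has_const_eqb/(nth_find c)/const_eqbP dL.
by move/(congr1 (@nat_of_ord _)); rewrite !const_tagE => cd; rewrite cL cd -dL.
Qed.

Definition separating D := forall c d, In c L -> In d L -> cst D c = cst D d -> c = d.

Definition blowup A : structure :=
  MkStructure (dom A * 'I_(size L).+2)%type (dom_inh A, ord0)
    (fun c => (cst A c, const_tag c)) (fun r args => Defs.rel A r (map_tuple fst args)).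

Lemma blowup_separating A : separating (blowup A).
Proof. by move=> c d cL dL [_]; apply: const_tag_inj. Qed.

Lemma strict_hom_fst A : strict_hom (blowup A) A fst.
Proof. by split=> // y; exists (y, ord0). Qed.

Lemma blowup_finite A : finite_structure A -> finite_structure (blowup A).
Proof.
case=> la Hla; exists (list_prod la (enum 'I_(size L).+2)) => -[x i].
apply: in_prod => //; have: i \in enum 'I_(size L).+2 by rewrite mem_enum.
by elim: (enum _) => //= j s IH; rewrite inE => /orP [/eqP ->|/IH]; [left | right].
Qed.

Lemma blowup_distinguishes A s1 s2 : s1 <> s2 -> atom_consts_in (AEq s1 s2) ->
  exists v, eval_term (blowup A) v s1 <> eval_term (blowup A) v s2.
Proof.
move=> ne Hc.
pose v x z : dom (blowup A) := (dom_inh A, if z == x then inord (size L) else ord_max).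
have vtag x z : size L <= val (v x z).2 by rewrite /=; case: eqP => _; rewrite ?inordK.
have tagE (p q : dom (blowup A)) : p = q -> val p.2 = val q.2 by move->.
case: s1 s2 ne Hc => [x|c] [y|d] ne Hc.
- exists (v x) => /tagE /=; rewrite eqxx; case: eqP => [yx|_]; first by case: ne; rewrite yx.
  by rewrite inordK // => /n_Sn.
- exists (v x) => /tagE xd; have := vtag x x.
  by rewrite xd /= leqNgt const_tag_lt //; apply: Hc; right; left.
- exists (v y) => /tagE cy; have := vtag y y.
  by rewrite -cy /= leqNgt const_tag_lt //; apply: Hc; left.
- exists (v 0) => -[_ /const_tag_inj cd]; apply: ne.
  by rewrite cd //; apply: Hc; [left | right; left].
Qed.

Lemma head_equation_unsat U E B H t1 t2 : (forall b, In b B -> is_rel_atom b) ->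
  In (AEq t1 t2) H -> t1 <> t2 -> atom_consts_in (AEq t1 t2) ->
  (forall x, In (TVar x) [:: t1; t2] -> x \notin E) ->
  ~ sat_ED (blowup full_singleton) (MkED U E B H).
Proof.
move=> Brel eqH ne Hc tE Hs; have [v] := blowup_distinguishes full_singleton ne Hc; apply.
have [|w [wv /(_ _ eqH) /= Hw]] := Hs v; first by move=> b /Brel; case: b.
have agree s : In s [:: t1; t2] -> eval_term _ w s = eval_term _ v s.
  by move=> sin; apply: eval_term_agree => y sy; apply/wv/tE; rewrite -sy.
by rewrite -!agree //; [right; left | left].
Qed.

Lemma body_equation_step U E t1 t2 l H (e := MkED U E (AEq t1 t2 :: l) H) :
  wf_ED e -> consts_in e ->
  (forall D, separating D -> sat_ED D e) \/
  exists e1, [/\ size (ed_body e1) <= size l, wf_ED e1, consts_in e1 &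
    forall D, separating D -> (sat_ED D e <-> sat_ED D e1)].
Proof.
rewrite {}/e => wf cs; have [W1 _ W3 _] := wf.
have tE z : In (TVar z) [:: t1; t2] -> z \notin E.
  by move=> zin; apply/W3/(W1 (AEq t1 t2)); [left | apply/mem_atom_vars].
have [<-|ne] := classic (t1 = t2).
  right; exists (MkED U E l H); split=> //.
  - by apply: wf_ED_incl wf => // [b|b [<-|]] //; right.
  - by apply: consts_in_incl cs => // b; right.
  - by move=> D _; apply: eq_sat_ED => // v; rewrite sat_conj_cons /=; tauto.
have [[x [t [ax tx _]]]|noVar] := equation_cases predT ne.
  right; exists (MkED U E (map (subst_atom x t) l) (map (subst_atom x t) H)); split.
  - by rewrite /= size_map.
  - exact: wf_body_subst ax wf.
  - exact: consts_in_body_subst ax cs.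
  - move=> D _; apply: sat_ED_body_subst => //; first by apply/tE/(equates_terms ax); left.
    by move=> y ty; apply/tE/(equates_terms ax); right.
left=> D sepD v /sat_conj_cons [/= e12 _]; exfalso.
have cL : atom_consts_in (AEq t1 t2) by apply: cs; left; left.
case: t1 t2 ne noVar cL e12 {wf cs tE W1 W3} => [x|c] [y|d] ne noVar cL.
- by have := noVar x (or_introl erefl).
- by have := noVar x (or_introl erefl).
- by have := noVar y (or_intror (or_introl erefl)).
- by move/sepD=> cd; apply: ne; rewrite cd //; apply: cL; [left | right; left].
Qed.

Lemma body_normal_form e : wf_ED e -> consts_in e ->
  exists e', [/\ wf_ED e', consts_in e', (forall b, In b (ed_body e') -> is_rel_atom b) &
    forall D, separating D -> (sat_ED D e <-> sat_ED D e')].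
Proof.
have [n] := ubnP (size (ed_body e)); elim: n e => // n IH [U E B H] /= ltBn wf cs.
have [Brel|[t1 [t2 [l [Bl ltl]]]]] := split_equation B; first by exists (MkED U E B H).
pose e0 := MkED U E (AEq t1 t2 :: l) H.
have wf0 : wf_ED e0 by apply: wf_ED_incl wf => // b /Bl.
have cs0 : consts_in e0 by apply: consts_in_incl cs => // b /Bl.
have eq0 D : sat_ED D (MkED U E B H) <-> sat_ED D e0.
  by apply: eq_sat_ED => // v; split; apply: sat_conj_incl => b /Bl.
have [e0_valid|[e1 [le1 wf1 cs1 eq1]]] := body_equation_step wf0 cs0.
  exists true_ED; split=> [||b []|D sepD]; first exact: wf_true_ED.
    by move=> a [] [].
  by rewrite eq0; split=> _; [apply: sat_true_ED | apply: e0_valid].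
have [|e' [wf' cs' rel' eq']] := IH e1 _ wf1 cs1.
  by rewrite (leq_ltn_trans le1) // (leq_trans ltl).
by exists e'; split=> // D sepD; rewrite eq0 eq1 // eq'.
Qed.

Lemma head_equation_step U E B t1 t2 l (e := MkED U E B (AEq t1 t2 :: l)) :
  wf_ED e -> consts_in e -> (forall b, In b B -> is_rel_atom b) ->
  sat_ED (blowup full_singleton) e ->
  exists H1, [/\ size H1 <= size l, wf_ED (MkED U E B H1), consts_in (MkED U E B H1) &
    forall D, sat_ED D e <-> sat_ED D (MkED U E B H1)].
Proof.
rewrite {}/e => wf cs Brel Hs.
have [<-|ne] := classic (t1 = t2).
  exists l; split=> //.
  - by apply: wf_ED_incl wf => // b; right.
  - by apply: consts_in_incl cs => // b; right.
  - by move=> D; apply: eq_sat_ED => // v; rewrite sat_conj_cons /=; tauto.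
have [[y [t [ay ty yE]]]|noE] := equation_cases (mem E) ne.
  exists (map (subst_atom y t) l); split; first by rewrite size_map.
  - exact: wf_head_subst ay wf.
  - exact: consts_in_head_subst ay cs.
  - by move=> D; apply: sat_ED_head_subst.
by case: (head_equation_unsat Brel (in_eq _ _) ne _ noE Hs); apply: cs; right; left.
Qed.

Lemma head_normal_form e : wf_ED e -> consts_in e ->
  (forall b, In b (ed_body e) -> is_rel_atom b) -> sat_ED (blowup full_singleton) e ->
  exists e', [/\ wf_ED e', is_TGD e' & forall D, sat_ED D e <-> sat_ED D e'].
Proof.
have [n] := ubnP (size (ed_head e)); elim: n e => // n IH [U E B H] /= ltHn wf cs Brel Hs.
have [Hrel|[t1 [t2 [l [Hl ltl]]]]] := split_equation H.
  by exists (MkED U E B H); split=> // a [/Brel|/Hrel].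
pose e0 := MkED U E B (AEq t1 t2 :: l).
have wf0 : wf_ED e0 by apply: wf_ED_incl wf => // b /Hl.
have cs0 : consts_in e0 by apply: consts_in_incl cs => // b /Hl.
have eq0 D : sat_ED D (MkED U E B H) <-> sat_ED D e0.
  by apply: eq_sat_ED => // v; split; apply: sat_conj_incl => b /Hl.
have [H1 [le1 wf1 cs1 eq1]] := head_equation_step wf0 cs0 Brel (iffLR (eq0 _) Hs).
have [||e' [wf' tgd' eq']] := IH (MkED U E B H1) _ wf1 cs1 Brel.
- by rewrite (leq_ltn_trans le1) // (leq_trans ltl).
- by apply/eq1/eq0.
- by exists e'; split=> // D; rewrite eq0 eq1 eq'.
Qed.

Lemma TGD_normal_form e : wf_ED e -> consts_in e -> sat_ED (blowup full_singleton) e ->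
  exists e', [/\ wf_ED e', is_TGD e' & forall D, separating D -> (sat_ED D e <-> sat_ED D e')].
Proof.
move=> wf cs Hs; have [e1 [wf1 cs1 rel1 eq1]] := body_normal_form wf cs.
have [|e' [wf' tgd' eq']] := head_normal_form wf1 cs1 rel1.
  by apply/eq1 => //; apply: blowup_separating.
by exists e'; split=> // D sepD; rewrite eq1.
Qed.

Lemma TGD_normal_forms S : (forall e, In e S -> wf_ED e) -> (forall e, In e S -> consts_in e) ->
  models (blowup full_singleton) S ->
  exists S', [/\ (forall e, In e S' -> wf_ED e), (forall e, In e S' -> is_TGD e) &
    forall D, separating D -> (models D S <-> models D S')].
Proof.
elim: S => [|e S IH] wfS csS; first by exists [::]; split=> // D _; split=> ? ? [].
case/models_cons=> He HS.
have [||S' [wf' tgd' eq']] := IH _ _ HS; first by move=> f fS; apply: wfS; right.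
  by move=> f fS; apply: csS; right.
have [e' [wfe tgde eqe]] := TGD_normal_form (wfS _ (in_eq _ _)) (csS _ (in_eq _ _)) He.
exists (e' :: S'); split=> [f [<-|/wf']|f [<-|/tgd']|D sepD] //.
by rewrite !models_cons eqe // eq'.
Qed.

End Constants.

(** * Strict homomorphisms preserve TGDs *)

Section StrictHomomorphisms.
Variables (A B : structure) (hom : dom A -> dom B).
Hypothesis hAB : strict_hom A B hom.

Lemma strict_hom_cancel : exists g, cancel g hom.
Proof. by case: hAB => surj _ _; have [g hg] := choice _ surj; exists g. Qed.

Lemma sat_rel_atom_hom v a : is_rel_atom a -> sat_atom A v a <-> sat_atom B (hom \o v) a.
Proof.
case: hAB => _ hcst hrel; case: a => // r args _ /=; rewrite hrel.
suff -> : map_tuple hom (map_tuple (eval_term A v) args) =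
          map_tuple (eval_term B (hom \o v)) args by [].
by apply: val_inj; rewrite /= -map_comp; apply: eq_map => -[y|c] //=; rewrite hcst.
Qed.

Lemma sat_conj_hom v l : (forall a, In a l -> is_rel_atom a) ->
  sat_conj A v l <-> sat_conj B (hom \o v) l.
Proof. by move=> lrel; split=> Hl a al; apply/(sat_rel_atom_hom _ (lrel a al)); apply: Hl. Qed.

Lemma sat_TGD_image e : is_TGD e -> sat_ED A e -> sat_ED B e.
Proof.
move=> tgd Hs v Hv; have [g hg] := strict_hom_cancel.
have brel a : In a (ed_body e) -> is_rel_atom a by move=> ae; apply: tgd; left.
have hrel a : In a (ed_head e) -> is_rel_atom a by move=> ae; apply: tgd; right.
have [|w [wv Hw]] := Hs (g \o v).
  apply/(sat_conj_hom _ brel); suff -> : hom \o (g \o v) = v by [].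
  by apply: functional_extensionality => x /=; rewrite hg.
exists (hom \o w); split=> [x xE|]; first by rewrite /= wv //= hg.
exact/(sat_conj_hom _ hrel).
Qed.

Lemma sat_TGD_preimage e : is_TGD e -> sat_ED B e -> sat_ED A e.
Proof.
move=> tgd Hs v; have [g hg] := strict_hom_cancel.
have brel a : In a (ed_body e) -> is_rel_atom a by move=> ae; apply: tgd; left.
have hrel a : In a (ed_head e) -> is_rel_atom a by move=> ae; apply: tgd; right.
move/(sat_conj_hom _ brel)/Hs=> [w [wv Hw]].
pose w' x := if x \in ed_evars e then g (w x) else v x.
exists w'; split=> [x /negbTE xE|]; first by rewrite /w' xE.
apply/(sat_conj_hom _ hrel); suff -> : hom \o w' = w by [].
by apply: functional_extensionality => x; rewrite /w' /=; case: ifP => xE; rewrite ?hg // wv ?xE.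
Qed.

Lemma models_TGDs_image S : (forall e, In e S -> is_TGD e) -> models A S -> models B S.
Proof. by move=> tgd HA e eS; apply: sat_TGD_image (tgd e eS) (HA e eS). Qed.

Lemma models_TGDs_preimage S : (forall e, In e S -> is_TGD e) -> models B S -> models A S.
Proof. by move=> tgd HB e eS; apply: sat_TGD_preimage (tgd e eS) (HB e eS). Qed.

End StrictHomomorphisms.

(** * Axiomatizability by TGDs within a class of structures *)

Section Axiomatizability.
Variable Q : structure -> Prop.

Definition preserved_images_in S := forall (A B : structure) (hom : dom A -> dom B),
  Q A -> Q B -> strict_hom A B hom -> models A S -> models B S.

Definition preserved_preimages_in S := forall (A B : structure) (hom : dom A -> dom B),
  Q A -> Q B -> strict_hom A B hom -> models B S -> models A S.

Lemma preserved_of_TGD_equiv S S' : (forall e, In e S' -> is_TGD e) ->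
  (forall A, Q A -> (models A S <-> models A S')) ->
  preserved_images_in S /\ preserved_preimages_in S.
Proof.
move=> tgd eqv; split=> A B hom QA QB hAB.
- by move/(eqv A QA)/(models_TGDs_image hAB tgd)/(eqv B QB).
- by move/(eqv B QB)/(models_TGDs_preimage hAB tgd)/(eqv A QA).
Qed.

Lemma TGD_equiv_of_preserved L S : (forall e, In e S -> wf_ED e) ->
  (forall e, In e S -> consts_in L e) ->
  Q full_singleton -> (forall A, Q A -> Q (blowup L A)) ->
  preserved_images_in S -> preserved_preimages_in S ->
  exists S', [/\ (forall e, In e S' -> wf_ED e), (forall e, In e S' -> is_TGD e) &
    forall A, Q A -> (models A S <-> models A S')].
Proof.
move=> wfS csS Qfull Qblow img pre.
have HS : models (blowup L full_singleton) S.
  apply: (pre _ _ _ (Qblow _ Qfull) Qfull (@strict_hom_fst L _)) => e _.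
  exact: sat_ED_full_singleton.
have [S' [wf' tgd' eqv]] := TGD_normal_forms wfS csS HS.
exists S'; split=> // A QA; have hA := @strict_hom_fst L A; have sepA := @blowup_separating L A.
split.
- by move/(pre _ _ _ (Qblow _ QA) QA hA)/(eqv _ sepA)/(models_TGDs_image hA tgd').
- by move/(models_TGDs_preimage hA tgd')/(eqv _ sepA)/(img _ _ _ (Qblow _ QA) QA hA).
Qed.

End Axiomatizability.

Definition consts_of S : list C :=
  flat_map (fun e => flat_map (fun a => flat_map
    (fun s => if s is TConst c then [:: c] else [::]) (atom_terms a))
    (ed_body e ++ ed_head e)) S.

Lemma consts_in_consts_of S e : In e S -> consts_in (consts_of S) e.
Proof.
move=> eS a ae c ca; apply/in_flat_map; exists e; split=> //.
apply/in_flat_map; exists a; split; first exact/in_app_iff.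
by apply/in_flat_map; exists (TConst c); split=> //; left.
Qed.

End EmbeddedDependencies.

Theorem theorem4 (C Rs : Type) (ar : Rs -> nat) (S : list (ED C Rs ar))
  (HS : forall e, In e S -> wf_ED e) :
  (equiv_to_TGDs S <-> preserved_images S /\ preserved_preimages S) /\
  (fin_equiv_to_TGDs S <-> fin_preserved_images S /\ fin_preserved_preimages S).
Proof.
have csS := @consts_in_consts_of _ _ _ S.
split; split.
- case=> S' [_ tgd eqv].
  have [img pre] := preserved_of_TGD_equiv (Q := fun _ => True) tgd (fun A _ => eqv A).
  by split=> A B h; [apply: img | apply: pre].
- case=> img pre.
  have [S' [wf' tgd' eqv]] := TGD_equiv_of_preserved (Q := fun _ => True) HS csS I
    (fun _ _ => I) (fun A B h _ _ => img A B h) (fun A B h _ _ => pre A B h).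
  by exists S'; split=> // A; apply: eqv.
- by case=> S' [_ tgd eqv]; apply: preserved_of_TGD_equiv tgd eqv.
- case=> img pre.
  exact: (TGD_equiv_of_preserved (Q := finite_structure) HS csS (full_singleton_finite _ _)
    (blowup_finite _) img pre).
Qed.
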